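(* Let $(X,f)$ be a dynamical system. Then (1) $(X,f)$ is weakly mixing if and only if it is $\nabla(\mathcal{F}_t)$-point transitive; (2) $(X,f)$ is strongly mixing if and only if it is $\nabla(\mathcal{F}_{cf})$-point transitive.
   Context: A dynamical system is a pair $(X,f)$ with $X$ a compact metric space and $f:X\to X$ continuous. $\mathbb{N}=\{1,2,\dots\}$. For $U,V\subset X$ and $x\in X$: $N(U,V)=\{n\in\mathbb{N}: U\cap f^{-n}(V)\neq\emptyset\}$ and $N(x,U)=\{n\in\mathbb{N}: f^n(x)\in U\}$. $(X,f)$ is weakly mixing if $(X\times X,f\times f)$ is transitive (i.e. hitting time sets of non-empty open sets are non-empty), and strongly mixing if $N(U,V)$ is cofinite for all non-empty open $U,V\subset X$. $\mathcal{F}_t$ is the family of thick sets: $F\subset\mathbb{N}$ such that for every $n$ there is $a\in\mathbb{N}$ with $\{a,a+1,\dots,a+n\}\subset F$. $\mathcal{F}_{cf}$ is the family of cofinite subsets of $\mathbb{N}$. For a family $\mathcal{F}$ of subsets of $\mathbb{N}$, a point $x$ is an $\mathcal{F}$-transitive point if $N(x,U)\in\mathcal{F}$ for every non-empty open $U\subset X$, and $(X,f)$ is $\mathcal{F}$-point transitive if such a point exists. For $F\subset\mathbb{N}$, $F-F=\{a-b: a,b\in F,\ a>b\}$, and $\nabla(\mathcal{F})=\{F\subset\mathbb{N}: F-F\in\mathcal{F}\}$. *)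

From Stdlib Require Import Reals List.
Open Scope R_scope.

Section Defs.
Variable X : Type.
Variable d : X -> X -> R.

Definition is_metric : Prop :=
  (forall x y, 0 <= d x y) /\
  (forall x y, d x y = 0 <-> x = y) /\
  (forall x y, d x y = d y x) /\
  (forall x y z, d x z <= d x y + d y z).

Definition is_open (U : X -> Prop) : Prop :=
  forall x, U x -> exists eps, 0 < eps /\ forall y, d x y < eps -> U y.

Definition is_open_prod (W : X * X -> Prop) : Prop :=
  forall p, W p -> exists eps, 0 < eps /\
    forall q, d (fst p) (fst q) < eps -> d (snd p) (snd q) < eps -> W q.

Definition is_compact : Prop :=
  forall (I : Type) (U : I -> X -> Prop),
    (forall i, is_open (U i)) -> (forall x, exists i, U i x) ->
    exists l : list I, forall x, exists i, In i l /\ U i x.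

Definition is_continuous (f : X -> X) : Prop :=
  forall x eps, 0 < eps -> exists delta, 0 < delta /\
    forall y, d x y < delta -> d (f x) (f y) < eps.
End Defs.

(* Subsets of N = {1,2,...} are predicates on nat; families are predicates on them. *)

Definition hitN {Y : Type} (g : Y -> Y) (U V : Y -> Prop) (n : nat) : Prop :=
  (1 <= n)%nat /\ exists y, U y /\ V (Nat.iter n g y).

Definition visitN {Y : Type} (g : Y -> Y) (x : Y) (U : Y -> Prop) (n : nat) : Prop :=
  (1 <= n)%nat /\ U (Nat.iter n g x).

Definition prod_map {Y : Type} (g : Y -> Y) (p : Y * Y) : Y * Y := (g (fst p), g (snd p)).

Definition weakly_mixing {X : Type} (d : X -> X -> R) (f : X -> X) : Prop :=
  forall W1 W2 : X * X -> Prop,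
    is_open_prod X d W1 -> is_open_prod X d W2 ->
    (exists p, W1 p) -> (exists p, W2 p) ->
    exists n, hitN (prod_map f) W1 W2 n.

Definition thick (F : nat -> Prop) : Prop :=
  forall n : nat, exists a : nat, (1 <= a)%nat /\ forall k, (k <= n)%nat -> F (a + k)%nat.

Definition cofinite (F : nat -> Prop) : Prop :=
  exists m : nat, forall n : nat, (1 <= n)%nat -> (m <= n)%nat -> F n.

Definition strongly_mixing {X : Type} (d : X -> X -> R) (f : X -> X) : Prop :=
  forall U V : X -> Prop, is_open X d U -> is_open X d V ->
    (exists x, U x) -> (exists x, V x) -> cofinite (hitN f U V).

Definition diffset (F : nat -> Prop) (n : nat) : Prop :=
  exists a b, F a /\ F b /\ (b < a)%nat /\ n = (a - b)%nat.

Definition nabla (Fam : (nat -> Prop) -> Prop) (F : nat -> Prop) : Prop :=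
  Fam (diffset F).

Definition transitive_point {X : Type} (d : X -> X -> R) (f : X -> X)
  (Fam : (nat -> Prop) -> Prop) (x : X) : Prop :=
  forall U : X -> Prop, is_open X d U -> (exists y, U y) -> Fam (visitN f x U).

Definition point_transitive {X : Type} (d : X -> X -> R) (f : X -> X)
  (Fam : (nat -> Prop) -> Prop) : Prop :=
  exists x, transitive_point d f Fam x.

From Stdlib Require Import Reals List Lra Lia Classical ClassicalEpsilon.
Open Scope R_scope.

(* Both statements are routed through the return-time sets N(U,U).
   - Difference sets of visit times: for every x and U, N(x,U) - N(x,U) is
     contained in N(U,U), with equality when the orbit of x is dense.
   - Hence, for a family closed under supersets whose members are unbounded,
     (X,f) is nabla(Fam)-point transitive iff f is transitive and N(U,U) is in
     Fam for every nonempty open U; the existence of a point with dense orbit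
     in a transitive system is a Baire-type argument with nested closed balls
     and compactness.
   - Weak mixing is equivalent to transitivity plus thick return times
     (Furstenberg's intersection argument one way, a box-hitting argument the
     other), and strong mixing to transitivity plus cofinite return times. *)

Lemma dependent_choice {A : Type} (Inv : A -> Prop) (Step : nat -> A -> A -> Prop) (a0 : A) :
  Inv a0 -> (forall m a, Inv a -> exists a', Inv a' /\ Step m a a') ->
  exists s : nat -> A, s O = a0 /\ forall m, Inv (s m) /\ Step m (s m) (s (S m)).
Proof.
  intros H0 Hstep.
  assert (Hg : forall m (a : {a | Inv a}),
             {a' : {a | Inv a} | Step m (proj1_sig a) (proj1_sig a')}).
  { intros m [a Ha]. apply constructive_indefinite_description.
    destruct (Hstep m a Ha) as (a' & Ha' & Hs). now exists (exist _ a' Ha'). }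
  set (s := fix s m := match m with O => exist Inv a0 H0 | S k => proj1_sig (Hg k (s k)) end).
  exists (fun m => proj1_sig (s m)). split; [reflexivity|].
  intros m. split; [exact (proj2_sig (s m))|exact (proj2_sig (Hg m (s m)))].
Qed.

Lemma iter_comm {Y : Type} (g : Y -> Y) n m y :
  Nat.iter n g (Nat.iter m g y) = Nat.iter m g (Nat.iter n g y).
Proof. rewrite <- !Nat.iter_add. f_equal. lia. Qed.

Lemma iter_prod_map {Y : Type} (g : Y -> Y) n p :
  Nat.iter n (prod_map g) p = (Nat.iter n g (fst p), Nat.iter n g (snd p)).
Proof. induction n as [|n IH]; simpl; [now destruct p|now rewrite IH]. Qed.

Definition upward_closed (Fam : (nat -> Prop) -> Prop) : Prop :=
  forall F G : nat -> Prop, Fam F -> (forall n, F n -> G n) -> Fam G.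

Definition unbounded_members (Fam : (nat -> Prop) -> Prop) : Prop :=
  forall F, Fam F -> forall N, exists n, (N <= n)%nat /\ F n.

Lemma thick_upward_closed : upward_closed thick.
Proof.
  intros F G HF HFG n. destruct (HF n) as (a & Ha & Hk). exists a. split; auto.
Qed.

Lemma thick_unbounded : unbounded_members thick.
Proof. intros F HF N. destruct (HF N) as (a & Ha & Hk). exists (a + N)%nat. split; auto; lia. Qed.

Lemma cofinite_upward_closed : upward_closed cofinite.
Proof. intros F G [m HF] HFG. exists m. auto. Qed.

Lemma cofinite_unbounded : unbounded_members cofinite.
Proof. intros F [m HF] N. exists (S (m + N)). split; [lia|]. apply HF; lia. Qed.

Section Dynamics.
Variables (X : Type) (d : X -> X -> R) (f : X -> X).

Definition transitive : Prop :=
  forall U V : X -> Prop, is_open X d U -> is_open X d V ->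
    (exists x, U x) -> (exists x, V x) -> exists n, hitN f U V n.

Definition dense_orbit (x : X) : Prop :=
  forall U : X -> Prop, is_open X d U -> (exists y, U y) -> exists n, visitN f x U n.

Definition preimage (n : nat) (V : X -> Prop) : X -> Prop := fun z => V (Nat.iter n f z).

Lemma hitN_preimage U V k m : hitN f U (preimage k V) m -> hitN f U V (k + m).
Proof.
  intros (Hm & z & Uz & Vz). split; [lia|]. exists z. split; auto.
  unfold preimage in Vz. now rewrite Nat.iter_add.
Qed.

Lemma diffset_visits_returns x U n : diffset (visitN f x U) n -> hitN f U U n.
Proof.
  intros (a & b & [Ha Ua] & [Hb Ub] & Hab & ->). split; [lia|].
  exists (Nat.iter b f x). split; auto.
  rewrite <- Nat.iter_add. now replace (a - b + b)%nat with a by lia.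
Qed.

Lemma late_visits_transitive x :
  (forall U, is_open X d U -> (exists y, U y) ->
     forall N, exists n, (N <= n)%nat /\ visitN f x U n) -> transitive.
Proof.
  intros Hx U V HU HV HUn HVn.
  destruct (Hx U HU HUn O) as (b & _ & Hb & Ub).
  destruct (Hx V HV HVn (S b)) as (a & Hab & Ha & Va).
  exists (a - b)%nat. split; [lia|]. exists (Nat.iter b f x). split; auto.
  rewrite <- Nat.iter_add. now replace (a - b + b)%nat with a by lia.
Qed.

Lemma open_inter (U V : X -> Prop) :
  is_open X d U -> is_open X d V -> is_open X d (fun z => U z /\ V z).
Proof.
  intros HU HV z [Uz Vz].
  destruct (HU z Uz) as (e1 & He1 & H1). destruct (HV z Vz) as (e2 & He2 & H2).
  exists (Rmin e1 e2). split; [now apply Rmin_glb_lt|].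
  pose proof (Rmin_l e1 e2). pose proof (Rmin_r e1 e2).
  intros y Hy. split; [apply H1|apply H2]; lra.
Qed.

Lemma open_box (U V : X -> Prop) :
  is_open X d U -> is_open X d V -> is_open_prod X d (fun p => U (fst p) /\ V (snd p)).
Proof.
  intros HU HV [a b] [Ua Vb]. simpl in *.
  destruct (HU a Ua) as (e1 & He1 & H1). destruct (HV b Vb) as (e2 & He2 & H2).
  exists (Rmin e1 e2). split; [now apply Rmin_glb_lt|].
  pose proof (Rmin_l e1 e2). pose proof (Rmin_r e1 e2).
  intros q Hq1 Hq2. split; [apply H1|apply H2]; lra.
Qed.

Hypothesis Hd : is_metric X d.

Lemma dist_self c : d c c = 0.
Proof. apply (proj1 (proj2 Hd)). reflexivity. Qed.

Lemma open_ball c e : is_open X d (fun z => d c z < e).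
Proof.
  destruct Hd as (_ & _ & _ & Htri).
  intros z Hz. exists (e - d c z). split; [lra|].
  intros y Hy. specialize (Htri c z y). lra.
Qed.

Lemma open_contains_cball U w :
  is_open X d U -> U w -> exists r, 0 < r /\ forall z, d w z <= r -> U z.
Proof.
  intros HU Uw. destruct (HU w Uw) as (e & He & Hball).
  exists (e / 2). split; [lra|]. intros z Hz. apply Hball. lra.
Qed.

Lemma open_prod_contains_box (W : X * X -> Prop) p :
  is_open_prod X d W -> W p ->
  exists U V, is_open X d U /\ is_open X d V /\ U (fst p) /\ V (snd p) /\
    forall a b, U a -> V b -> W (a, b).
Proof.
  intros HW Wp. destruct (HW p Wp) as (e & He & Hbox).
  exists (fun z => d (fst p) z < e), (fun z => d (snd p) z < e).
  repeat split; try apply open_ball; try (rewrite dist_self; exact He).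
  intros a b Ha Hb. now apply (Hbox (a, b)).
Qed.

Hypothesis Hf : is_continuous X d f.

Lemma iter_continuous n : is_continuous X d (Nat.iter n f).
Proof.
  induction n as [|n IH]; intros x eps He.
  - exists eps. split; auto.
  - destruct (Hf (Nat.iter n f x) eps He) as (d1 & Hd1 & H1).
    destruct (IH x d1 Hd1) as (d2 & Hd2 & H2).
    exists d2. split; auto. intros y Hy. simpl. apply H1, H2, Hy.
Qed.

Lemma open_preimage n U : is_open X d U -> is_open X d (preimage n U).
Proof.
  intros HU z Uz. destruct (HU _ Uz) as (e & He & Hball).
  destruct (iter_continuous n z e He) as (dl & Hdl & Hcont).
  exists dl. split; auto. intros y Hy. apply Hball, Hcont, Hy.
Qed.

Lemma open_hit_set U V m :
  is_open X d U -> is_open X d V -> is_open X d (fun z => U z /\ preimage m V z).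
Proof. intros HU HV. apply open_inter; auto. now apply open_preimage. Qed.

(* Conversely to [diffset_visits_returns]: along a dense orbit every return time of U
   is a difference of visit times, since the orbit visits U n f^{-n}(U). *)
Lemma returns_diffset_visits x U n :
  dense_orbit x -> is_open X d U -> hitN f U U n -> diffset (visitN f x U) n.
Proof.
  intros Hx HU (Hn & z & Uz & Uz').
  destruct (Hx (fun z => U z /\ preimage n U z)) as (b & Hb & Ub & Ub');
    [now apply open_hit_set|now exists z|].
  exists (n + b)%nat, b. unfold preimage in Ub'. rewrite <- Nat.iter_add in Ub'.
  repeat split; auto; lia.
Qed.

Lemma transitive_preimage_nonempty U :
  transitive -> is_open X d U -> (exists x, U x) -> forall k, exists w, preimage k U w.
Proof.
  intros Ht HU HUn k. induction k as [|k IH]; [exact HUn|].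
  destruct (Ht (preimage k U) (preimage k U)) as (n & Hn & w & _ & Hw);
    try apply open_preimage; auto.
  exists (Nat.iter (n - 1) f w). unfold preimage in *.
  rewrite <- !Nat.iter_add in *. now replace (S k + (n - 1))%nat with (k + n)%nat by lia.
Qed.


Lemma transitive_cball_hit U V :
  transitive -> is_open X d U -> is_open X d V -> (exists x, U x) -> (exists x, V x) ->
  exists y r, 0 < r /\ (forall z, d y z <= r -> U z) /\
    exists n, (1 <= n)%nat /\ forall z, d y z <= r -> V (Nat.iter n f z).
Proof.
  intros Ht HU HV HUn HVn.
  destruct (Ht U V HU HV HUn HVn) as (n & Hn & w & Uw & Vw).
  destruct (open_contains_cball _ w (open_hit_set U V n HU HV)) as (r & Hr & Hball);
    [now split|].
  exists w, r. split; [exact Hr|split].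
  - intros z Hz. apply (Hball z Hz).
  - exists n. split; [exact Hn|]. intros z Hz. apply (Hball z Hz).
Qed.

Lemma transitive_cball_hit_list e (l : list X) :
  transitive -> 0 < e -> forall U, is_open X d U -> (exists x, U x) ->
  exists y r, 0 < r /\ (forall z, d y z <= r -> U z) /\
    forall c, In c l -> exists n, (1 <= n)%nat /\
      forall z, d y z <= r -> d c (Nat.iter n f z) < e.
Proof.
  intros Ht He. induction l as [|c l IH]; intros U HU [u Uu].
  - destruct (open_contains_cball U u HU Uu) as (r & Hr & Hball).
    exists u, r. repeat split; auto. intros c [].
  - destruct (transitive_cball_hit U (fun z => d c z < e) Ht HU (open_ball c e))
      as (y1 & r1 & Hr1 & Hin1 & n1 & Hn1 & Hhit1);
      [now exists u|exists c; now rewrite dist_self|].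
    destruct (IH (fun z => d y1 z < r1) (open_ball y1 r1))
      as (y2 & r2 & Hr2 & Hin2 & Hhit2); [exists y1; now rewrite dist_self|].
    exists y2, r2. split; [exact Hr2|split].
    + intros z Hz. apply Hin1, Rlt_le, Hin2, Hz.
    + intros c' [<-|Hc']; [|now apply Hhit2].
      exists n1. split; [exact Hn1|]. intros z Hz. apply Hhit1, Rlt_le, Hin2, Hz.
Qed.

Lemma approximating_orbit_dense x :
  (forall e, 0 < e -> forall u, exists n, (1 <= n)%nat /\ d u (Nat.iter n f x) < e) ->
  dense_orbit x.
Proof.
  intros Happrox U HU [u Uu]. destruct (HU u Uu) as (e & He & Hball).
  destruct (Happrox e He u) as (n & Hn & Hclose). exists n. split; [exact Hn|].
  now apply Hball.
Qed.

Lemma inv_succ_small e : 0 < e -> exists m, / INR (S m) < e.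
Proof.
  intros He. destruct (archimed_cor1 e He) as (N & HN & HN0).
  exists (N - 1)%nat. now replace (S (N - 1)) with N by lia.
Qed.

Hypothesis Hc : is_compact X d.

Lemma finite_net e : 0 < e -> exists l : list X, forall x, exists c, In c l /\ d c x < e.
Proof.
  intros He. apply (Hc X (fun c z => d c z < e)).
  - intros c. apply open_ball.
  - intros x. exists x. now rewrite dist_self.
Qed.

Lemma nested_cballs_meet (s : nat -> X * R) :
  (forall m, 0 <= snd (s m)) ->
  (forall m z, d (fst (s (S m))) z <= snd (s (S m)) -> d (fst (s m)) z <= snd (s m)) ->
  exists z, forall m, d (fst (s m)) z <= snd (s m).
Proof.
  intros Hpos Hdecr. destruct Hd as (_ & _ & Hsym & Htri).
  assert (Hnest : forall m k z, d (fst (s (k + m)%nat)) z <= snd (s (k + m)%nat) ->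
                                d (fst (s m)) z <= snd (s m)).
  { intros m k. induction k as [|k IH]; intros z Hz; [exact Hz|]. now apply IH, Hdecr. }
  apply NNPP. intros Hno.
  (* otherwise the open complements of the balls cover X *)
  destruct (Hc nat (fun m z => snd (s m) < d (fst (s m)) z)) as [l Hl].
  - intros m z Hz. exists (d (fst (s m)) z - snd (s m)). split; [lra|].
    intros y Hy. specialize (Htri (fst (s m)) y z). rewrite (Hsym y z) in Htri. lra.
  - intros z. apply NNPP. intros Hnz. apply Hno. exists z. intros m.
    apply Rnot_lt_le. intros Hlt. apply Hnz. now exists m.
  - set (M := list_max l). destruct (Hl (fst (s M))) as (i & Hi & Hlt).
    assert (HiM : (i <= M)%nat).
    { apply (proj1 (Forall_forall _ l) (proj1 (list_max_le l M) (le_n _)) i Hi). }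
    assert (Hcenter : d (fst (s i)) (fst (s M)) <= snd (s i)).
    { apply (Hnest i (M - i)%nat). replace (M - i + i)%nat with M by lia.
      rewrite dist_self. apply Hpos. }
    lra.
Qed.

(* A transitive system on a nonempty compact metric space has a point with dense orbit:
   shrink closed balls so that the m-th one is mapped within 1/(m+1) of every point
   of a 1/(m+1)-net, and take a point in their intersection. *)
Lemma transitive_dense_orbit : inhabited X -> transitive -> exists x, dense_orbit x.
Proof.
  intros [y0] Ht.
  set (cball := fun (p : X * R) z => d (fst p) z <= snd p).
  set (Step := fun m p p' =>
    (forall z, cball p' z -> cball p z) /\
    exists l, (forall x, exists c, In c l /\ d c x < / INR (S m)) /\
      forall c, In c l -> exists n, (1 <= n)%nat /\
        forall z, cball p' z -> d c (Nat.iter n f z) < / INR (S m)).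
  assert (Hstep : forall m p, 0 < snd p -> exists p', 0 < snd p' /\ Step m p p').
  { intros m [y r] Hr. simpl in Hr.
    assert (Heps : 0 < / INR (S m)) by (apply Rinv_0_lt_compat, lt_0_INR; lia).
    destruct (finite_net _ Heps) as (l & Hnet).
    destruct (transitive_cball_hit_list _ l Ht Heps (fun z => d y z < r) (open_ball y r))
      as (y' & r' & Hr' & Hin & Hhit); [exists y; now rewrite dist_self|].
    exists (y', r'). split; [exact Hr'|split].
    - intros z Hz. apply Rlt_le, Hin, Hz.
    - exists l. split; [exact Hnet|exact Hhit]. }
  destruct (dependent_choice (fun p => 0 < snd p) Step (y0, 1) ltac:(simpl; lra) Hstep)
    as (s & _ & Hs).
  destruct (nested_cballs_meet s) as [x Hx];
    [intros m; apply Rlt_le, Hs|intros m; apply Hs|].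
  exists x. apply approximating_orbit_dense. intros e He u.
  destruct (inv_succ_small (e / 2)) as [m Hm]; [lra|].
  destruct (Hs m) as (_ & _ & l & Hnet & Hhit).
  destruct (Hnet u) as (c & Hc_in & Hcu).
  destruct (Hhit c Hc_in) as (n & Hn & Hclose).
  exists n. split; [exact Hn|].
  specialize (Hclose x (Hx (S m))).
  destruct Hd as (_ & _ & Hsym & Htri).
  specialize (Htri u c (Nat.iter n f x)). rewrite (Hsym u c) in Htri. lra.
Qed.


(* Weak mixing implies transitivity: apply it to the boxes U x U and V x V. *)
Lemma weakly_mixing_transitive : weakly_mixing d f -> transitive.
Proof.
  intros Hw U V HU HV [u Uu] [v Vv].
  destruct (Hw (fun p => U (fst p) /\ U (snd p)) (fun p => V (fst p) /\ V (snd p)))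
    as (n & Hn & p & [Up _] & [Vp _]);
    [now apply open_box|now apply open_box|now exists (u, u)|now exists (v, v)|].
  rewrite iter_prod_map in Vp. exists n. split; [exact Hn|]. now exists (fst p).
Qed.

(* Furstenberg's intersection lemma: in a weakly mixing system, for nonempty open A, B,
   C, D there are nonempty open A', B' with N(A',B') contained in N(A,B) and N(C,D);
   namely A' = A n f^{-m}(C) and B' = B n f^{-m}(D) for m in N(A x B, C x D). *)
Lemma weakly_mixing_refinement A B C D :
  weakly_mixing d f -> is_open X d A -> is_open X d B -> is_open X d C -> is_open X d D ->
  (exists x, A x) -> (exists x, B x) -> (exists x, C x) -> (exists x, D x) ->
  exists A' B', is_open X d A' /\ is_open X d B' /\ (exists x, A' x) /\ (exists x, B' x) /\
    forall n, hitN f A' B' n -> hitN f A B n /\ hitN f C D n.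
Proof.
  intros Hw HA HB HC HD [a Aa] [b Bb] [c Cc] [e De].
  destruct (Hw (fun p => A (fst p) /\ B (snd p)) (fun p => C (fst p) /\ D (snd p)))
    as (m & _ & p & [Ap Bp] & [Cp Dp]);
    [now apply open_box|now apply open_box|now exists (a, b)|now exists (c, e)|].
  rewrite iter_prod_map in Cp, Dp. simpl in Cp, Dp.
  exists (fun z => A z /\ preimage m C z), (fun z => B z /\ preimage m D z).
  split; [now apply open_hit_set|split; [now apply open_hit_set|]].
  split; [now exists (fst p)|split; [now exists (snd p)|]].
  intros n (Hn & y & [Ay Cy] & [By Dy]). split; split; auto.
  - now exists y.
  - exists (Nat.iter m f y). split; [exact Cy|]. unfold preimage in Dy. now rewrite iter_comm.
Qed.

(* In a weakly mixing system the return times N(U,U) form a thick set: refining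
   N(U, f^{-k}(U)) for k <= n gives m with m, m+1, ..., m+n all in N(U,U). *)
Lemma weakly_mixing_returns_thick U :
  weakly_mixing d f -> is_open X d U -> (exists x, U x) -> thick (hitN f U U).
Proof.
  intros Hw HU HUn n.
  assert (Hstage : exists A B, is_open X d A /\ is_open X d B /\
            (exists x, A x) /\ (exists x, B x) /\
            forall m, hitN f A B m -> forall k, (k <= n)%nat -> hitN f U U (m + k)).
  { induction n as [|n IH].
    - exists U, U. do 4 (split; [assumption|]). intros m Hm k Hk.
      now replace (m + k)%nat with m by lia.
    - destruct IH as (A & B & HA & HB & HAn & HBn & Hret).
      destruct (weakly_mixing_refinement A B U (preimage (S n) U) Hw HA HB HU
                  (open_preimage _ _ HU) HAn HBn HUn)
        as (A' & B' & HA' & HB' & HA'n & HB'n & Hsub);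
        [apply transitive_preimage_nonempty; auto; now apply weakly_mixing_transitive|].
      exists A', B'. do 4 (split; [assumption|]). intros m Hm k Hk.
      destruct (Hsub m Hm) as [HAB HUS].
      destruct (Nat.eq_dec k (S n)) as [->|Hne]; [|apply Hret; auto; lia].
      rewrite Nat.add_comm. now apply hitN_preimage. }
  destruct Hstage as (A & B & HA & HB & HAn & HBn & Hret).
  destruct (weakly_mixing_transitive Hw A B HA HB HAn HBn) as [m Hm].
  exists m. split; [exact (proj1 Hm)|]. now apply Hret.
Qed.

(* Conversely, transitivity with thick return times lets two boxes be hit at a common
   time: with P in N(U1,U2), Q in N(V1,V2), s in N(U1 n f^{-P}U2, V1 n f^{-Q}V2) and W the
   corresponding hit set, thickness of N(W,W) yields a with a+Q, a+P in N(W,W), and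
   n = a+P+Q is a common hitting time. *)
Lemma thick_returns_box_hit U1 V1 U2 V2 :
  transitive -> (forall W, is_open X d W -> (exists x, W x) -> thick (hitN f W W)) ->
  is_open X d U1 -> is_open X d V1 -> is_open X d U2 -> is_open X d V2 ->
  (exists x, U1 x) -> (exists x, V1 x) -> (exists x, U2 x) -> (exists x, V2 x) ->
  exists n z1 z2, (1 <= n)%nat /\ U1 z1 /\ V1 z2 /\
    U2 (Nat.iter n f z1) /\ V2 (Nat.iter n f z2).
Proof.
  intros Ht Hthick HU1 HV1 HU2 HV2 HU1n HV1n HU2n HV2n.
  destruct (Ht U1 U2 HU1 HU2 HU1n HU2n) as (P & HP & u & Uu & Uu').
  destruct (Ht V1 V2 HV1 HV2 HV1n HV2n) as (Q & HQ & v & Vv & Vv').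
  set (A := fun z => U1 z /\ preimage P U2 z).
  set (B := fun z => V1 z /\ preimage Q V2 z).
  assert (HA : is_open X d A) by now apply open_hit_set.
  assert (HB : is_open X d B) by now apply open_hit_set.
  destruct (Ht A B HA HB) as (s & _ & w & Aw & Bw); [now exists u|now exists v|].
  destruct (Hthick (fun z => A z /\ preimage s B z) (open_hit_set A B s HA HB)
              (ex_intro _ w (conj Aw Bw)) (P + Q)%nat) as (a & _ & Hk).
  destruct (Hk Q ltac:(lia)) as (_ & z1 & [[U1z1 _] _] & [[_ U2z1] _]).
  destruct (Hk P ltac:(lia)) as (_ & z2 & [_ [V1z2 _]] & [_ [_ V2z2]]).
  unfold preimage in *. rewrite <- !Nat.iter_add in U2z1, V2z2.
  exists (a + Q + P)%nat, z1, (Nat.iter s f z2). repeat split; auto; [lia|..].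
  - now replace (a + Q + P)%nat with (P + (a + Q))%nat by lia.
  - rewrite <- !Nat.iter_add in V2z2 |- *.
    now replace (a + Q + P + s)%nat with (Q + s + (a + P))%nat by lia.
Qed.

Lemma weakly_mixing_iff :
  weakly_mixing d f <->
  transitive /\ forall U, is_open X d U -> (exists x, U x) -> thick (hitN f U U).
Proof.
  split.
  - intros Hw. split; [now apply weakly_mixing_transitive|].
    intros U HU HUn. now apply weakly_mixing_returns_thick.
  - intros [Ht Hthick] W1 W2 HW1 HW2 [p Wp] [q Wq].
    destruct (open_prod_contains_box W1 p HW1 Wp) as (U1 & V1 & HU1 & HV1 & Up & Vp & Hbox1).
    destruct (open_prod_contains_box W2 q HW2 Wq) as (U2 & V2 & HU2 & HV2 & Uq & Vq & Hbox2).
    destruct (thick_returns_box_hit U1 V1 U2 V2 Ht Hthick HU1 HV1 HU2 HV2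
                (ex_intro _ _ Up) (ex_intro _ _ Vp) (ex_intro _ _ Uq) (ex_intro _ _ Vq))
      as (n & z1 & z2 & Hn & Hz1 & Hz2 & Hz1' & Hz2').
    exists n. split; [exact Hn|]. exists (z1, z2). split; [now apply Hbox1|].
    rewrite iter_prod_map. now apply Hbox2.
Qed.

(* Strong mixing = transitivity + cofinite return times; for the converse, N(U,V)
   contains m + N(W,W) where m is in N(U,V) and W = U n f^{-m}(V). *)
Lemma strongly_mixing_iff :
  strongly_mixing d f <->
  transitive /\ forall U, is_open X d U -> (exists x, U x) -> cofinite (hitN f U U).
Proof.
  split.
  - intros Hs. split; [|intros U HU HUn; now apply Hs].
    intros U V HU HV HUn HVn. destruct (Hs U V HU HV HUn HVn) as [m Hm].
    exists (S m). apply Hm; lia.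
  - intros [Ht Hcof] U V HU HV HUn HVn.
    destruct (Ht U V HU HV HUn HVn) as (m & Hm & w & Uw & Vw).
    destruct (Hcof (fun z => U z /\ preimage m V z)) as [M HM];
      [now apply open_hit_set|now exists w|].
    exists (S (M + m)). intros n Hn HMn.
    destruct (HM (n - m)%nat ltac:(lia) ltac:(lia)) as (_ & z & [Uz _] & [_ Vz]).
    split; [exact Hn|]. exists z. split; [exact Uz|].
    unfold preimage in Vz. rewrite <- Nat.iter_add in Vz.
    now replace (m + (n - m))%nat with n in Vz by lia.
Qed.

(* For a family closed under supersets with unbounded members, nabla(Fam)-point
   transitivity means transitivity plus N(U,U) in Fam for all nonempty open U:
   along a dense orbit N(x,U) - N(x,U) = N(U,U), and a nabla(Fam)-transitive point
   visits every nonempty open set at arbitrarily late times. *)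
Lemma nabla_point_transitive_iff Fam :
  inhabited X -> upward_closed Fam -> unbounded_members Fam ->
  point_transitive d f (nabla Fam) <->
  transitive /\ forall U, is_open X d U -> (exists x, U x) -> Fam (hitN f U U).
Proof.
  intros Hne Hup Hunb. split.
  - intros [x Hx]. split.
    + apply (late_visits_transitive x). intros U HU HUn N.
      destruct (Hunb _ (Hx U HU HUn) N) as (e & HNe & a & b & Va & _ & Hab & ->).
      exists a. split; [lia|exact Va].
    + intros U HU HUn. apply (Hup _ _ (Hx U HU HUn)), diffset_visits_returns.
  - intros [Ht Hret]. destruct (transitive_dense_orbit Hne Ht) as [x Hx].
    exists x. intros U HU HUn. apply (Hup _ _ (Hret U HU HUn)).
    intros n. now apply returns_diffset_visits.
Qed.

End Dynamics.

Theorem theorem3p7 (X : Type) (d : X -> X -> R) (f : X -> X)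
  (Hne : inhabited X) (Hd : is_metric X d) (Hc : is_compact X d) (Hf : is_continuous X d f) :
  (weakly_mixing d f <-> point_transitive d f (nabla thick)) /\
  (strongly_mixing d f <-> point_transitive d f (nabla cofinite)).
Proof.
  split.
  - rewrite (weakly_mixing_iff X d f Hd Hf).
    rewrite (nabla_point_transitive_iff X d f Hd Hf Hc thick Hne
               thick_upward_closed thick_unbounded).
    reflexivity.
  - rewrite (strongly_mixing_iff X d f Hf).
    rewrite (nabla_point_transitive_iff X d f Hd Hf Hc cofinite Hne
               cofinite_upward_closed cofinite_unbounded).
    reflexivity.
Qed.
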